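(* Let $q$ be a prime power and let $M$ be a $2\times 2$ matrix over $\mathbb{F}_{q^2}$ with two distinct eigenvalues $c_1,c_2$ and eigenvectors $u_1,u_2\in\mathbb{F}_{q^2}^2$ ($u_i$ an eigenvector for $c_i$) such that $\langle u_i,u_i\rangle=0$ for $i=1,2$. Then there is $o\in\mathbb{F}_{q^2}^*$ such that $\mathrm{Num}'_0(M)=\{to\}_{t\in\mathbb{F}_q}$.
   Context: The Hermitian form on $\mathbb{F}_{q^2}^n$ is $\langle u,v\rangle=\sum_i u_i^q v_i$. For an $n\times n$ matrix $M$ over $\mathbb{F}_{q^2}$ with $n\ge 2$, $\mathrm{Num}'_0(M)=\{\langle u,Mu\rangle: u\in\mathbb{F}_{q^2}^n\setminus\{0\},\ \langle u,u\rangle=0\}$. *)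

From HB Require Import structures.
From mathcomp Require Import all_boot all_order all_algebra all_field.
Set Implicit Arguments. Unset Strict Implicit. Unset Printing Implicit Defensive.
Import GRing.Theory.
Local Open Scope ring_scope.

(* Hermitian form on F^n (F = F_{q^2}), vectors are column vectors:
   <u,v> = \sum_i u_i^q v_i *)
Definition herm (F : finFieldType) (q n : nat) (u v : 'cV[F]_n) : F :=
  \sum_(i < n) (u i 0) ^+ q * v i 0.

Definition Num0' (F : finFieldType) (q n : nat) (M : 'M[F]_n) : F -> Prop :=
  fun x => exists u : 'cV[F]_n,
    u != 0 /\ herm q u u = 0 /\ x = herm q u (M *m u).

From HB Require Import structures.
From mathcomp Require Import all_boot all_order all_algebra all_field.
From mathcomp Require Import ring.
Set Implicit Arguments.
Unset Strict Implicit.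
Unset Printing Implicit Defensive.

Import GRing.Theory.
Local Open Scope ring_scope.

(* Eigenvectors u1, u2 for distinct eigenvalues form a basis, and as both are
   isotropic the form only sees w = <u1,u2>, which is nonzero by
   nondegeneracy. For u = a u1 + b u2 and s = a^q b w one gets
   <u,u> = s + s^q and <u,Mu> = c2 s + c1 s^q, so u is isotropic iff
   s^q = -s, and then <u,Mu> = (c2 - c1) s. The solutions of s^q = -s form the
   F_q-line spanned by s0 = x - x^q for any x outside F_q. *)

Section TwoVectors.
Variable F : fieldType.

Lemma eq_cV2 (u v : 'cV[F]_2) :
  u ord0 0 = v ord0 0 -> u ord_max 0 = v ord_max 0 -> u = v.
Proof.
move=> eq0 eq1; apply/matrixP=> i j; rewrite [j]ord1.
case: i => [[|[|//]] lti].
  by rewrite (_ : Ordinal lti = ord0) //; apply/val_inj.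
by rewrite (_ : Ordinal lti = ord_max) //; apply/val_inj.
Qed.

Definition det2 (u v : 'cV[F]_2) : F :=
  u ord0 0 * v ord_max 0 - v ord0 0 * u ord_max 0.

Lemma cramer2 (u v w : 'cV[F]_2) : det2 u v != 0 ->
  w = (det2 w v / det2 u v) *: u + (det2 u w / det2 u v) *: v.
Proof. by move=> nz; apply: eq_cV2; rewrite !mxE /det2; field. Qed.

Lemma det2_eq0 (u v : 'cV[F]_2) :
  v != 0 -> det2 u v = 0 -> exists l, u = l *: v.
Proof.
move=> nz_v /eqP; rewrite subr_eq0 => /eqP uv_vu.
have [v0 | v1] : v ord0 0 != 0 \/ v ord_max 0 != 0.
  apply/orP; rewrite -negb_and; apply: contra nz_v => /andP[/eqP v0 /eqP v1].
  by apply/eqP/eq_cV2; rewrite mxE.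
- exists (u ord0 0 / v ord0 0); apply: eq_cV2; rewrite mxE ?divfK //.
  by rewrite mulrAC uv_vu mulrC mulKf.
- exists (u ord_max 0 / v ord_max 0); apply: eq_cV2; rewrite mxE ?divfK //.
  by rewrite mulrAC [u _ _ * _]mulrC -uv_vu mulfK.
Qed.

Lemma eigenvectors_det2_neq0 (M : 'M[F]_2) (c1 c2 : F) (u1 u2 : 'cV[F]_2) :
  c1 != c2 -> u1 != 0 -> u2 != 0 ->
  M *m u1 = c1 *: u1 -> M *m u2 = c2 *: u2 -> det2 u1 u2 != 0.
Proof.
move=> c12 nz_u1 nz_u2 Mu1 Mu2; apply/eqP => /(det2_eq0 nz_u2)[l u1E].
have : (c1 - c2) *: u1 == 0.
  by rewrite scalerBl -Mu1 {1}u1E -scalemxAr Mu2 scalerA mulrC -scalerA -u1E subrr.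
by rewrite scalemx_eq0 subr_eq0 (negbTE c12) (negbTE nz_u1).
Qed.

End TwoVectors.

Section HermitianForm.
Variables (F : finFieldType) (q : nat).
Hypothesis conjD : {morph (fun x : F => x ^+ q) : x y / x + y}.
Hypothesis conjK : involutive (fun x : F => x ^+ q).

Lemma conj0 : 0 ^+ q = 0 :> F.
Proof. by apply: (addrI (0 ^+ q)); rewrite -conjD !addr0. Qed.

Lemma conjN (x : F) : (- x) ^+ q = - x ^+ q.
Proof. by apply/eqP; rewrite -subr_eq0 opprK -conjD addNr conj0. Qed.

Lemma conj_subr_antifixed (x : F) : (x - x ^+ q) ^+ q = - (x - x ^+ q).
Proof. by rewrite conjD conjN conjK opprB. Qed.

Lemma antifixedP (s0 s : F) : s0 != 0 -> s0 ^+ q = - s0 ->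
  s ^+ q = - s <-> exists t, t ^+ q = t /\ s = t * s0.
Proof.
move=> nz_s0 s0_anti; split=> [s_anti | [t [t_fix ->]]].
  by exists (s / s0); rewrite exprMn exprVn s_anti s0_anti invrN mulrNN divfK.
by rewrite exprMn t_fix s0_anti mulrN.
Qed.

Section Sesquilinear.
Variable n : nat.
Implicit Types (u v w : 'cV[F]_n) (a b c d : F).

Lemma herm_conj u v : herm q v u = herm q u v ^+ q.
Proof.
rewrite /herm (big_morph _ conjD conj0); apply: eq_bigr => i _.
by rewrite exprMn conjK mulrC.
Qed.

Lemma herm0l v : herm q 0 v = 0.
Proof. by rewrite /herm big1 // => i _; rewrite mxE conj0 mul0r. Qed.

Lemma hermDr u v w : herm q u (v + w) = herm q u v + herm q u w.
Proof. by rewrite /herm -big_split; apply: eq_bigr => i _; rewrite mxE mulrDr. Qed.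

Lemma hermZr u v a : herm q u (a *: v) = a * herm q u v.
Proof. by rewrite /herm mulr_sumr; apply: eq_bigr => i _; rewrite mxE mulrCA. Qed.

Lemma hermDl u v w : herm q (u + v) w = herm q u w + herm q v w.
Proof. by rewrite herm_conj hermDr conjD -!herm_conj. Qed.

Lemma hermZl u v a : herm q (a *: u) v = a ^+ q * herm q u v.
Proof. by rewrite herm_conj hermZr exprMn -herm_conj. Qed.

Lemma herm_delta u i : herm q u (delta_mx i 0) = u i 0 ^+ q.
Proof.
rewrite /herm (bigD1 i) //= big1 => [|j ji]; first by rewrite mxE !eqxx mulr1 addr0.
by rewrite mxE (negbTE ji) mulr0.
Qed.

Lemma herm_nondegenerate u : (forall v, herm q u v = 0) -> u = 0.
Proof.
move=> u_orth; apply/matrixP => i j; rewrite [j]ord1 mxE.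
by rewrite -[u i 0]conjK -herm_delta u_orth conj0.
Qed.

End Sesquilinear.

Section IsotropicEigenbasis.
Variables (M : 'M[F]_2) (c1 c2 : F) (u1 u2 : 'cV[F]_2).
Hypotheses (c12 : c1 != c2) (nz_u1 : u1 != 0) (nz_u2 : u2 != 0).
Hypotheses (Mu1 : M *m u1 = c1 *: u1) (Mu2 : M *m u2 = c2 *: u2).
Hypotheses (iso_u1 : herm q u1 u1 = 0) (iso_u2 : herm q u2 u2 = 0).

Let w := herm q u1 u2.

Lemma eigenbasis_span u : exists a b, u = a *: u1 + b *: u2.
Proof.
have nz_det := eigenvectors_det2_neq0 c12 nz_u1 nz_u2 Mu1 Mu2.
by do 2!eexists; apply: cramer2.
Qed.

Lemma herm_eigenbasis a b c d :
  herm q (a *: u1 + b *: u2) (c *: u1 + d *: u2) = a ^+ q * d * w + b ^+ q * c * w ^+ q.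
Proof.
rewrite !(hermDl, hermZl, hermDr, hermZr) iso_u1 iso_u2 (herm_conj u1 u2) -/w.
by rewrite !mulr0 add0r addr0 !mulrA.
Qed.

Lemma herm_eigenbasis_neq0 : w != 0.
Proof.
apply: contra nz_u1 => /eqP w0; apply/eqP/herm_nondegenerate => v.
have [a [b ->]] := eigenbasis_span v.
have u1E : u1 = 1 *: u1 + 0 *: u2 by rewrite scale1r scale0r addr0.
by rewrite [X in herm q X _]u1E herm_eigenbasis w0 conj0 !mulr0 addr0.
Qed.

Lemma conj_eigenbasis_coef a b : (a ^+ q * b * w) ^+ q = b ^+ q * a * w ^+ q.
Proof. by rewrite !exprMn conjK [a * _]mulrC. Qed.

Lemma herm_eigenbasis_self a b (s := a ^+ q * b * w) :
  herm q (a *: u1 + b *: u2) (a *: u1 + b *: u2) = s + s ^+ q.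
Proof. by rewrite herm_eigenbasis conj_eigenbasis_coef. Qed.

Lemma herm_eigenbasis_mulmx a b (s := a ^+ q * b * w) :
  herm q (a *: u1 + b *: u2) (M *m (a *: u1 + b *: u2)) = c2 * s + c1 * s ^+ q.
Proof.
rewrite mulmxDr -!scalemxAr Mu1 Mu2 !scalerA herm_eigenbasis.
by rewrite /s conj_eigenbasis_coef; ring.
Qed.

Lemma Num0'_eigenbasis x :
  Num0' q M x <-> exists s : F, s ^+ q = - s /\ x = (c2 - c1) * s.
Proof.
split=> [[u [nz_u [iso_u ->]]] | [s [s_anti ->]]].
  have [a [b uE]] := eigenbasis_span u.
  rewrite uE herm_eigenbasis_self in iso_u; rewrite uE herm_eigenbasis_mulmx.
  set s := a ^+ q * b * w in iso_u *; exists s.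
  have s_anti : s ^+ q = - s by apply/eqP; rewrite -subr_eq0 opprK addrC iso_u.
  by rewrite s_anti; split=> //; ring.
have nz_w := herm_eigenbasis_neq0.
have coefE : 1 ^+ q * (s / w) * w = s by rewrite expr1n mul1r divfK.
exists (1 *: u1 + (s / w) *: u2).
rewrite herm_eigenbasis_self herm_eigenbasis_mulmx coefE s_anti addrN.
split; last by split=> //; ring.
have : herm q (1 *: u1 + (s / w) *: u2) (0 *: u1 + 1 *: u2) = w.
  by rewrite herm_eigenbasis expr1n !mulr1 !mulr0 mul0r mul1r addr0.
by move=> u_u2; apply: contra_neq nz_w => u0; rewrite -u_u2 u0 herm0l.
Qed.

End IsotropicEigenbasis.

End HermitianForm.

Lemma exists_exp_nonfixed (F : finFieldType) (q : nat) :
  (1 < q)%N -> (q < #|F|)%N -> exists x : F, x ^+ q != x.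
Proof.
move=> q_gt1 q_lt_F; apply/existsP; apply: contraLR q_lt_F => /existsPn fixed.
have size_p : size ('X^q - 'X : {poly F}) = q.+1.
  by rewrite size_polyDl ?size_polyXn // size_polyN size_polyX ltnS.
have nz_p : ('X^q - 'X : {poly F}) != 0 by rewrite -size_poly_eq0 size_p.
rewrite -leqNgt cardE -ltnS -size_p; apply: max_poly_roots nz_p _ (enum_uniq _).
by apply/allP => x _; rewrite rootE !hornerE (eqP (negbNE (fixed x))) subrr.
Qed.

Theorem proposition3 (q : nat) (F : finFieldType)
  (hq : exists p k : nat, prime p /\ (0 < k)%N /\ q = (p ^ k)%N)
  (hF : #|F| = (q ^ 2)%N)
  (M : 'M[F]_2) (c1 c2 : F) (u1 u2 : 'cV[F]_2)
  (hc : c1 != c2)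
  (hu1 : u1 != 0) (hu2 : u2 != 0)
  (he1 : M *m u1 = c1 *: u1) (he2 : M *m u2 = c2 *: u2)
  (hi1 : herm q u1 u1 = 0) (hi2 : herm q u2 u2 = 0) :
  exists o : F, o != 0 /\
    (forall x : F, Num0' q M x <-> exists t : F, t ^+ q = t /\ x = t * o).
Proof.
have [p [k [p_prime [k_gt0 qE]]]] := hq.
have q_gt1 : (1 < q)%N by rewrite qE -(expn0 p) ltn_exp2l ?prime_gt1.
have p_char : p \in [pchar F] by apply: (card_finPcharP (n := k * 2)); rewrite // hF qE expnM.
have conjD : {morph (fun x : F => x ^+ q) : x y / x + y}.
  by move=> x y; apply: exprDn_pchar; rewrite qE pnatX pnatE // p_char.
have conjK : involutive (fun x : F => x ^+ q).
  by move=> x; rewrite -exprM mulnn -hF expf_card.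
have [x nfix_x] : exists x : F, x ^+ q != x.
  by apply: exists_exp_nonfixed; rewrite // hF -{1}[q]expn1 ltn_exp2l.
have nz_s0 : x - x ^+ q != 0 by rewrite subr_eq0 eq_sym.
have antiP := antifixedP _ nz_s0 (conj_subr_antifixed conjD conjK x).
exists ((c2 - c1) * (x - x ^+ q)); split; first by rewrite mulf_neq0 // subr_eq0 eq_sym.
move=> y; rewrite (Num0'_eigenbasis conjD conjK hc hu1 hu2 he1 he2 hi1 hi2).
split=> [[s [/antiP[t [t_fix ->]] ->]] | [t [t_fix ->]]].
  by exists t; rewrite mulrCA.
by exists (t * (x - x ^+ q)); rewrite mulrCA; split=> //; apply/antiP; exists t.
Qed.
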